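(* Let $k\ge1$ and let $p_1<p_2<\dots<p_k$ be odd primes, $n=p_1\cdots p_k$. Then $$\prod_{i=1}^{k-2}p_i^{2^{k-i-1}-1}\le \varphi(n)^{2^{k-1}/k-1}.$$
   Context: $\varphi$ is Euler's totient function; an empty product equals $1$. *)

From Stdlib Require Import Reals.
From mathcomp Require Import all_boot.

From Stdlib Require Import Reals Lra.
From mathcomp Require Import all_boot zify.

(* Since the p_i increase, a product of powers prod p_i^(w_i) is at most
   prod p_i^(u_i) as soon as every tail sum of the weights w is at most the
   corresponding tail sum of u: excess weight can always be pushed onto the
   next, larger prime.  After raising the left-hand side to the k-th power its
   weights k (2^(k-i-1) - 1) are dominated in this sense by E (3, 0, 1, ..., 1),
   E = 2^(k-1) - k, i.e. by (p_1^3 p_3 ... p_(k-1))^E.  Consecutive odd primes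
   differ by at least 2, so p_1^3 <= (p_1 - 1)(p_2 - 1)(p_3 - 1) and
   p_j <= p_(j+1) - 1; hence p_1^3 p_3 ... p_(k-1) <= phi(n), and taking k-th
   roots gives the claim. *)

Lemma totient_prod_primes (s : seq nat) :
  all prime s -> uniq s -> totient (\prod_(q <- s) q) = \prod_(q <- s) q.-1.
Proof.
elim: s => [|q s IH] /= => [_ _|/andP[q_pr s_pr] /andP[q_s s_uniq]].
  by rewrite !big_nil.
have q_coprime : coprime q (\prod_(r <- s) r).
  rewrite prime_coprime // Euclid_dvd_prod //; apply/negP.
  elim: s q_s s_pr {IH s_uniq} => [|r s IH]; first by rewrite big_nil.
  rewrite inE big_cons negb_or => /andP[q_r q_s] /andP[r_pr s_pr].
  by case/orP; [rewrite dvdn_prime2 // (negPf q_r) | exact: IH].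
by rewrite !big_cons totient_coprime // totient_prime // IH.
Qed.

Lemma leq_exp2rW m n e : m <= n -> m ^ e <= n ^ e.
Proof. by move=> mn; have [->//|e_gt0] := posnP e; rewrite leq_exp2r. Qed.

Lemma prodnXl (I : Type) (r : seq I) (P : pred I) (F : I -> nat) e :
  \prod_(i <- r | P i) F i ^ e = (\prod_(i <- r | P i) F i) ^ e.
Proof. by rewrite (big_morph (fun x => x ^ e) (fun x y => expnMn x y e) (exp1n e)). Qed.

Lemma odd_ltn_gap m n : odd m -> odd n -> m < n -> m.+2 <= n.
Proof.
move=> odd_m odd_n; rewrite leq_eqVlt => /orP[/eqP mn|//].
by move: odd_n; rewrite -mn /= odd_m.
Qed.

Section ExpMajorization.

Variables (z : nat -> nat) (lo hi : nat).
Hypothesis z_gt0 : forall j, lo <= j < hi -> 0 < z j.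
Hypothesis z_homo : forall j, lo <= j -> j.+1 < hi -> z j <= z j.+1.

(* [y ^ c] is weight [c] carried over from indices below [a], on a base [y]
   no larger than the remaining [z j]. *)
Lemma leq_prod_exp_carry a c y w u :
  lo <= a -> (a < hi -> y <= z a) ->
  c + \sum_(a <= j < hi) w j <= \sum_(a <= j < hi) u j ->
  (forall m, a < m -> \sum_(m <= j < hi) w j <= \sum_(m <= j < hi) u j) ->
  y ^ c * \prod_(a <= j < hi) z j ^ w j <= \prod_(a <= j < hi) z j ^ u j.
Proof.
move len : (hi - a) => d; elim: d a c y len => [|d IH] a c y len lo_a y_za c_tail tails.
  have hi_a : hi <= a by rewrite -subn_eq0 len.
  by move: c_tail; rewrite !big_geq // addn0 leqn0 => /eqP->.
have a_hi : a < hi by rewrite -subn_gt0 len.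
move: c_tail; rewrite !(big_ltn a_hi) => c_tail.
have za_gt0 : 0 < z a by apply: z_gt0; rewrite lo_a.
have yc_le : y ^ c <= z a ^ c by rewrite leq_exp2rW // y_za.
set c' := c + w a - u a.
have head : y ^ c * z a ^ w a <= z a ^ u a * z a ^ c'.
  rewrite -expnD; apply: leq_trans (leq_mul yc_le (leqnn _)) _.
  by rewrite -expnD leq_pexp2l //; lia.
rewrite mulnA; apply: leq_trans (leq_mul head (leqnn _)) _.
rewrite -mulnA leq_mul //; apply: IH => //.
- by rewrite subnS len.
- exact: ltnW.
- by move=> a1_hi; apply: z_homo.
- by have := tails a.+1 (ltnSn a); lia.
- by move=> m am; apply: tails; apply: ltnW.
Qed.

Lemma leq_prod_exp_tails w u :
  (forall m, lo <= m -> \sum_(m <= j < hi) w j <= \sum_(m <= j < hi) u j) ->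
  \prod_(lo <= j < hi) z j ^ w j <= \prod_(lo <= j < hi) z j ^ u j.
Proof.
move=> tails; rewrite -[X in X <= _]mul1n -(exp1n 0).
apply: leq_prod_exp_carry => //.
- by move=> lo_hi; apply: z_gt0; rewrite leqnn.
- exact: tails.
- by move=> m /ltnW; apply: tails.
Qed.

End ExpMajorization.

Lemma sum_pow2_pred_tail m k : m <= k ->
  \sum_(m <= j < k) (2 ^ (k - j - 1) - 1) = 2 ^ (k - m) - (k - m) - 1.
Proof.
move Ht : (k - m) => t; elim: t m Ht => [|t IH] m Ht mk.
  by rewrite big_geq // -subn_eq0 Ht.
have m_k : m < k by rewrite -subn_gt0 Ht.
have IHm := IH m.+1; rewrite subnS Ht in IHm.
rewrite big_ltn // IHm // Ht subSS subn0 expnS.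
by have := ltn_expl t (ltnSn 1); lia.
Qed.

Lemma pow2_tail_bound {r k} : 0 < r -> r < k -> k.+1 * (2 ^ r - 1) <= r * 2 ^ k.
Proof.
move=> r_gt0; elim: k => [//|k IH]; rewrite ltnS leq_eqVlt => /orP[/eqP <-|r_k].
  rewrite expnS; have [r_le1|r_gt1] := leqP r 1.
    by have -> : r = 1 by lia.
  by have := ltn_expl r (ltnSn 1); nia.
have := IH r_k; have := leq_pexp2l (isT : 0 < 2) (ltnW r_k).
by rewrite expnS; nia.
Qed.

Definition head_mult (j : nat) : nat := if j == 1 then 3 else if j == 2 then 0 else 1.

Lemma sum_head_mult_ge3 m k : 3 <= m -> \sum_(m <= j < k) head_mult j = k - m.
Proof.
move=> m_ge3; rewrite -[k - m]muln1 -sum_nat_const_nat.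
apply: eq_big_nat => j /andP[m_j _].
by rewrite /head_mult !gtn_eqF // (leq_trans _ (leq_trans m_ge3 m_j)).
Qed.

Lemma tail_weights_le k m : 3 <= k -> 0 < m ->
  (\sum_(m <= j < k) (2 ^ (k - j - 1) - 1)) * k
  <= (\sum_(m <= j < k) head_mult j) * (2 ^ (k - 1) - k).
Proof.
move=> k_ge3 m_gt0; have [k_m|m_k] := leqP k m; first by rewrite !big_geq.
rewrite sum_pow2_pred_tail; last exact: ltnW.
have k_le_pow : k <= 2 ^ (k - 1) by have := ltn_expl (k - 1) (ltnSn 1); lia.
case: m m_gt0 m_k => [//|[|[|m]]] _ m_k.
- rewrite (big_ltn m_k) (big_ltn k_ge3) sum_head_mult_ge3 // /head_mult /=.
  by nia.
- rewrite (big_ltn k_ge3) sum_head_mult_ge3 // /head_mult /=.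
  have pow_k : 2 ^ (k - 1) = 2 * 2 ^ (k - 2) by rewrite -expnS; congr (2 ^ _); lia.
  rewrite pow_k; have [k_ge6|k_lt6] := leqP 6 k.
    by have := ltn_expl (k - 2) (ltnSn 1); nia.
  by case: k k_ge3 k_lt6 {m_k k_le_pow pow_k} => [|[|[|[|[|[|]]]]]].
- rewrite sum_head_mult_ge3 //.
  have r_gt0 : 0 < k - m.+3 by rewrite subn_gt0.
  have r_lt : k - m.+3 < k.-1 by lia.
  have := pow2_tail_bound r_gt0 r_lt; rewrite prednK; last exact: leq_trans k_ge3.
  by have := ltn_expl (k - m.+3) (ltnSn 1); nia.
Qed.

Section OddPrimeSequence.

Variables (k : nat) (p : nat -> nat).
Hypothesis p_odd_prime : forall i, 1 <= i <= k -> prime (p i) /\ odd (p i).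
Hypothesis p_incr : forall i, 1 <= i < k -> p i < p i.+1.

Lemma p_prime i : 1 <= i <= k -> prime (p i).
Proof. by case/p_odd_prime. Qed.

Lemma p_gt0 i : 1 <= i <= k -> 0 < p i.
Proof. by move/p_prime/prime_gt0. Qed.

Lemma p_gap i : 1 <= i < k -> (p i).+2 <= p i.+1.
Proof.
move=> /andP[i_gt0 i_lt]; apply: odd_ltn_gap; last by apply: p_incr; rewrite i_gt0.
- by case: (p_odd_prime i); rewrite // i_gt0 ltnW.
- by case: (p_odd_prime i.+1); rewrite // i_lt.
Qed.

Lemma p_homo : {in [pred i | 0 < i <= k] &, {homo p : i j / i < j}}.
Proof.
apply: homo_ltn_in => [y x z|i j|i]; first exact: ltn_trans.
  by rewrite !inE => /andP[i_gt0 _] /andP[_ j_le] l /andP[i_l l_j]; rewrite inE; lia.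
by rewrite !inE => /andP[i_gt0 _] /andP[_ i_lt]; apply: p_incr; rewrite i_gt0.
Qed.

Lemma totient_prod_p :
  totient (\prod_(1 <= i < k.+1) p i) = \prod_(1 <= i < k.+1) (p i).-1.
Proof.
have in_range : all [pred i | 0 < i <= k] (index_iota 1 k.+1).
  by apply/allP => i; rewrite mem_index_iota.
have := @totient_prod_primes (map p (index_iota 1 k.+1)); rewrite !big_map; apply.
  apply/allP => _ /mapP[i i_in ->]; apply: p_prime.
  by rewrite mem_index_iota in i_in.
apply: (sorted_uniq ltn_trans ltnn).
exact: homo_sorted_in p_homo in_range (iota_ltn_sorted _ _).
Qed.

Lemma head_prod_le_totient : 3 <= k ->
  p 1 ^ 3 * \prod_(3 <= j < k) p j <= \prod_(1 <= i < k.+1) (p i).-1.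
Proof.
move=> k_ge3.
rewrite (big_ltn (_ : 1 < k.+1)) ?(big_ltn (_ : 2 < k.+1)) ?(big_ltn (_ : 3 < k.+1)) //; try lia.
rewrite !mulnA; apply: leq_mul.
  have [p1_prime p1_odd] : prime (p 1) /\ odd (p 1) by apply: p_odd_prime; lia.
  have p1_ge3 := odd_prime_gt2 p1_odd p1_prime.
  have p2_gap : (p 1).+2 <= p 2 by apply: p_gap; lia.
  have p3_gap : (p 2).+2 <= p 3 by apply: p_gap; lia.
  apply: (@leq_trans ((p 1).-1 * (p 1).+1 * (p 1).+3)).
    by rewrite !expnS expn0; nia.
  by rewrite leq_mul ?leq_mul //; lia.
rewrite [X in _ <= X]big_add1 succnK big_nat_cond [X in _ <= X]big_nat_cond.
apply: leq_prod => j /andP[/andP[j_ge3 j_lt] _].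
by rewrite -ltnS prednK; [apply: p_incr | apply: p_gt0]; lia.
Qed.

Lemma weighted_prod_le_head : 3 <= k ->
  (\prod_(1 <= i < k) p i ^ (2 ^ (k - i - 1) - 1)) ^ k
  <= (p 1 ^ 3 * \prod_(3 <= j < k) p j) ^ (2 ^ (k - 1) - k).
Proof.
move=> k_ge3; set E := 2 ^ (k - 1) - k.
have -> : (p 1 ^ 3 * \prod_(3 <= j < k) p j) ^ E
          = \prod_(1 <= j < k) p j ^ (head_mult j * E).
  rewrite (big_ltn (_ : 1 < k)) ?(big_ltn (_ : 2 < k)); try lia.
  rewrite (_ : head_mult 1 = 3) // (_ : head_mult 2 = 0) // mul0n expn0 mul1n.
  rewrite expnMn -expnM -prodnXl; congr (_ * _); apply: eq_big_nat => j /andP[j_ge3 _].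
  by rewrite /head_mult !gtn_eqF ?mul1n //; lia.
rewrite -prodnXl; under eq_bigr do rewrite -expnM.
apply: leq_prod_exp_tails => [j j_in|j j_gt0 j_lt|m m_gt0].
- by apply: p_gt0; lia.
- by apply/ltnW/p_incr; lia.
- by rewrite -!big_distrl; apply: tail_weights_le.
Qed.

Lemma weighted_prod_le_totient : 1 <= k ->
  (\prod_(1 <= i < k.-1) p i ^ (2 ^ (k - i - 1) - 1)) ^ k
  <= totient (\prod_(1 <= i < k.+1) p i) ^ (2 ^ (k - 1) - k).
Proof.
move=> k_gt0; have [k_le2|k_ge3] := leqP k 2.
  rewrite big_geq; last lia.
  by rewrite (_ : 2 ^ (k - 1) - k = 0) ?exp1n ?expn0 //; case: k k_gt0 k_le2 => [|[|[|]]].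
set F := fun i => p i ^ (2 ^ (k - i - 1) - 1).
have -> : \prod_(1 <= i < k.-1) F i = \prod_(1 <= i < k) F i.
  rewrite -[in RHS](prednK k_gt0) big_nat_recr /=; last lia.
  by rewrite /F (_ : k - k.-1 - 1 = 0) ?muln1 //; lia.
apply: leq_trans (weighted_prod_le_head k_ge3) _.
by rewrite leq_exp2rW // totient_prod_p head_prod_le_totient.
Qed.

End OddPrimeSequence.

Lemma INR_expn m n : INR (m ^ n) = pow (INR m) n.
Proof. by elim: n => [|n IH]; rewrite ?expn0 // expnS -multE mult_INR IH. Qed.

Lemma INR_le_Rpower a b k e : 0 < k -> 0 < b -> a ^ k <= b ^ e ->
  Rle (INR a) (Rpower (INR b) (Rdiv (INR e) (INR k))).
Proof.
move=> k_gt0 b_gt0 ab.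
have kR : Rlt 0 (INR k) by apply/lt_0_INR/ltP.
have bR : Rlt 0 (INR b) by apply/lt_0_INR/ltP.
have [->|a_gt0] := posnP a; first by apply: Rlt_le; apply: exp_pos.
have aR : Rlt 0 (INR a) by apply/lt_0_INR/ltP.
have kth_root x : Rlt 0 x -> x = Rpower (Rpower x (INR k)) (Rinv (INR k)).
  by move=> xR; rewrite Rpower_mult Rinv_r ?Rpower_1 //; lra.
rewrite [INR a]kth_root // /Rdiv -Rpower_mult !Rpower_pow // -!INR_expn.
apply: Rle_Rpower_l; first by apply/Rlt_le/Rinv_0_lt_compat.
by split; [apply/lt_0_INR/ltP; rewrite expn_gt0 a_gt0 | apply/le_INR/leP].
Qed.

Theorem theorem4 (k : nat) (p : nat -> nat)
  (hk : (1 <= k)%N)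
  (hprime : forall i : nat, (1 <= i <= k)%N -> prime (p i) /\ odd (p i))
  (hincr : forall i : nat, (1 <= i < k)%N -> (p i < p i.+1)%N) :
  let n := (\prod_(1 <= i < k.+1) p i)%N in
  Rle (INR (\prod_(1 <= i < k.-1) p i ^ (2 ^ (k - i - 1) - 1))%N)
      (Rpower (INR (totient n))
              (Rminus (Rdiv (INR (2 ^ (k - 1))%N) (INR k)) R1)).
Proof.
move=> n.
have k_le_pow : k <= 2 ^ (k - 1) by have := ltn_expl (k - 1) (ltnSn 1); lia.
have -> : Rminus (Rdiv (INR (2 ^ (k - 1))) (INR k)) R1 = Rdiv (INR (2 ^ (k - 1) - k)) (INR k).
  have kR : Rlt 0 (INR k) by apply/lt_0_INR/ltP.
  by rewrite -minusE minus_INR; [field; lra | apply/leP].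
apply: INR_le_Rpower => //; last exact: weighted_prod_le_totient.
rewrite totient_gt0 /n big_nat_cond prodn_cond_gt0 // => i /andP[i_in _].
exact: p_gt0 hprime i i_in.
Qed.
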